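(* Let $\mathcal{A}$ be a complex Banach algebra with identity, $\lambda$ a nonzero complex number, and $M = \begin{pmatrix} A & B \\ C & D \end{pmatrix} \in M_2(\mathcal{A})$ with $A, D \in \mathcal{A}^d$. Suppose $BC, CB \in \mathcal{A}^d$, and $$AB = \lambda A^\pi B D (CB)^\pi \quad\text{and}\quad DC = \lambda D^\pi C A (BC)^\pi.$$ Put $P = \begin{pmatrix} A & 0 \\ 0 & D \end{pmatrix}$ and $Q = \begin{pmatrix} 0 & B \\ C & 0 \end{pmatrix}$, so $M=P+Q$, $P^d=\begin{pmatrix} A^d & 0 \\ 0 & D^d \end{pmatrix}$, $Q^d=\begin{pmatrix} 0 & B(CB)^d \\ C(BC)^d & 0 \end{pmatrix}$. Then $M \in M_2(\mathcal{A})^d$ and $$\begin{aligned} M^d ={}& \begin{pmatrix} (BC)^\pi A^d & B(CB)^d D^\pi \\ C(BC)^d A^\pi & (CB)^\pi D^d \end{pmatrix} + \sum_{n=0}^{\infty} (Q^d)^{n+2} P M^n P^\pi + Q^\pi \sum_{n=0}^{\infty} M^n Q (P^d)^{n+2} \\ &- \sum_{n=0}^{\infty} \sum_{k=0}^{\infty} (Q^d)^{k+1} P M^{n+k} Q (P^d)^{n+2} - \sum_{n=0}^{\infty} (Q^d)^{n+2} P M^n Q P^d.\end{aligned}$$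
   Context: $M_2(\mathcal{A})$ is the Banach algebra of $2\times 2$ matrices over $\mathcal{A}$. An element $x$ of a Banach algebra has a generalized Drazin (g-Drazin) inverse $x^d$ if $x^d$ commutes with $x$, $x^d = x^dxx^d$ and $x - x^2x^d$ is quasinilpotent (i.e. $\lim\|y^n\|^{1/n}=0$ for $y=x-x^2x^d$); $\mathcal{A}^d$ (resp. $M_2(\mathcal{A})^d$) denotes the set of g-Drazin invertible elements. The spectral idempotent is $x^\pi = 1 - xx^d$. *)

From Stdlib Require Import Reals.
Open Scope R_scope.

Record cplx := mkC { cRe : R; cIm : R }.
Definition cadd (a b : cplx) := mkC (cRe a + cRe b) (cIm a + cIm b).
Definition cmul (a b : cplx) :=
  mkC (cRe a * cRe b - cIm a * cIm b) (cRe a * cIm b + cIm a * cRe b).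
Definition c0 := mkC 0 0.
Definition c1 := mkC 1 0.
Definition cabs (a : cplx) := sqrt (cRe a ^ 2 + cIm a ^ 2).

Fixpoint powg {T} (mul : T -> T -> T) (one : T) (x : T) (n : nat) : T :=
  match n with O => one | S k => mul (powg mul one x k) x end.

Definition cvg_to {T} (sub : T -> T -> T) (nrm : T -> R) (u : nat -> T) (l : T) :=
  forall eps, 0 < eps -> exists N, forall n, (N <= n)%nat -> nrm (sub (u n) l) < eps.

Definition cauchy {T} (sub : T -> T -> T) (nrm : T -> R) (u : nat -> T) :=
  forall eps, 0 < eps -> exists N, forall m n, (N <= m)%nat -> (N <= n)%nat ->
    nrm (sub (u m) (u n)) < eps.

Fixpoint psum {T} (add : T -> T -> T) (zero : T) (u : nat -> T) (n : nat) : T :=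
  match n with O => zero | S k => add (psum add zero u k) (u k) end.

(* lim_n ||y^n||^(1/n) = 0, written out: for every eps>0, eventually
   ||y^n||^(1/n) <= eps, i.e. ||y^n|| <= eps^n. *)
Definition quasinil {T} (mul : T -> T -> T) (one : T) (nrm : T -> R) (y : T) :=
  forall eps, 0 < eps -> exists N, forall n, (N <= n)%nat ->
    nrm (powg mul one y n) <= eps ^ n.

Definition gdrazin {T} (add mul : T -> T -> T) (opp : T -> T) (one : T)
  (nrm : T -> R) (x xd : T) :=
  mul xd x = mul x xd /\ xd = mul (mul xd x) xd /\
  quasinil mul one nrm (add x (opp (mul (mul x x) xd))).

Record CBanachAlg := {
  car :> Type;
  bzero : car; bone : car;
  badd : car -> car -> car; bopp : car -> car; bmul : car -> car -> car;
  bscal : cplx -> car -> car;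
  bnorm : car -> R;
  baddA : forall x y z, badd x (badd y z) = badd (badd x y) z;
  baddC : forall x y, badd x y = badd y x;
  badd0 : forall x, badd x bzero = x;
  baddN : forall x, badd x (bopp x) = bzero;
  bmulA : forall x y z, bmul x (bmul y z) = bmul (bmul x y) z;
  bmul1l : forall x, bmul bone x = x;
  bmul1r : forall x, bmul x bone = x;
  bmulDl : forall x y z, bmul (badd x y) z = badd (bmul x z) (bmul y z);
  bmulDr : forall x y z, bmul x (badd y z) = badd (bmul x y) (bmul x z);
  bscal1 : forall x, bscal c1 x = x;
  bscalA : forall a b x, bscal a (bscal b x) = bscal (cmul a b) x;
  bscalDl : forall a b x, bscal (cadd a b) x = badd (bscal a x) (bscal b x);
  bscalDr : forall a x y, bscal a (badd x y) = badd (bscal a x) (bscal a y);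
  bscalMl : forall a x y, bscal a (bmul x y) = bmul (bscal a x) y;
  bscalMr : forall a x y, bscal a (bmul x y) = bmul x (bscal a y);
  bnorm_ge0 : forall x, 0 <= bnorm x;
  bnorm_eq0 : forall x, bnorm x = 0 -> x = bzero;
  bnormD : forall x y, bnorm (badd x y) <= bnorm x + bnorm y;
  bnormZ : forall a x, bnorm (bscal a x) = cabs a * bnorm x;
  bnormM : forall x y, bnorm (bmul x y) <= bnorm x * bnorm y;
  bnorm1 : bnorm bone = 1;
  bcomplete : forall u : nat -> car,
    cauchy (fun x y => badd x (bopp y)) bnorm u ->
    exists l, cvg_to (fun x y => badd x (bopp y)) bnorm u l
}.

Arguments bzero {c}. Arguments bone {c}. Arguments badd {c}. Arguments bopp {c}.
Arguments bmul {c}. Arguments bscal {c}. Arguments bnorm {c}.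

Section Alg.
Variable A : CBanachAlg.
Definition bsub (x y : A) := badd x (bopp y).
Definition gd (x xd : A) := gdrazin badd bmul bopp bone bnorm x xd.
Definition spi (x xd : A) : A := bsub bone (bmul x xd).

Record M2 := mkM2 { m11 : A; m12 : A; m21 : A; m22 : A }.
Definition m2add (X Y : M2) :=
  mkM2 (badd (m11 X) (m11 Y)) (badd (m12 X) (m12 Y))
       (badd (m21 X) (m21 Y)) (badd (m22 X) (m22 Y)).
Definition m2opp (X : M2) :=
  mkM2 (bopp (m11 X)) (bopp (m12 X)) (bopp (m21 X)) (bopp (m22 X)).
Definition m2sub (X Y : M2) := m2add X (m2opp Y).
Definition m2mul (X Y : M2) :=
  mkM2 (badd (bmul (m11 X) (m11 Y)) (bmul (m12 X) (m21 Y)))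
       (badd (bmul (m11 X) (m12 Y)) (bmul (m12 X) (m22 Y)))
       (badd (bmul (m21 X) (m11 Y)) (bmul (m22 X) (m21 Y)))
       (badd (bmul (m21 X) (m12 Y)) (bmul (m22 X) (m22 Y))).
Definition m2zero := mkM2 bzero bzero bzero bzero.
Definition m2one := mkM2 bone bzero bzero bone.
(* a Banach-algebra norm on M_2(A) equivalent to any standard one
   (submultiplicative; all such norms give the same topology) *)
Definition m2norm (X : M2) :=
  bnorm (m11 X) + bnorm (m12 X) + bnorm (m21 X) + bnorm (m22 X).
Definition m2pow (X : M2) (n : nat) := powg m2mul m2one X n.

Definition m2gd (X Xd : M2) := gdrazin m2add m2mul m2opp m2one m2norm X Xd.
Definition m2series (u : nat -> M2) (s : M2) :=
  cvg_to m2sub m2norm (psum m2add m2zero u) s.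
End Alg.

Arguments mkM2 {A}. Arguments m2add {A}. Arguments m2sub {A}. Arguments m2mul {A}.
Arguments m2one {A}. Arguments m2pow {A}. Arguments m2gd {A}. Arguments m2series {A}.
Arguments gd {A}. Arguments spi {A}. Arguments bsub {A}.

(* Write M = P + Q with P = diag(A, D) and Q = antidiag(B, C).  Both are g-Drazin invertible
   (for Q because (BC)^d and (CB)^d are linked by Cline's formula), and the two hypotheses are
   the entries of the single relation P Q = lam P^pi Q P Q^pi.  Multiplying it by (P^d)^2 on
   the left and by (Q^d)^2 on the right gives P^d Q = P Q^d = 0, whence P Q = lam Q P.  Then
   Q^d P = lam^-k (Q^d)^(k+1) P (Q Q^pi)^k for every k, and since Q Q^pi is quasinilpotent this
   forces Q^d P = 0; symmetrically Q P^d = 0.  So every term of the four series vanishes, the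
   leading block matrix equals Q^pi P^d + Q^d P^pi = P^d + Q^d, and P^d + Q^d is the g-Drazin
   inverse of P + Q: the remainder P P^pi + Q Q^pi is a sum of two lam-commuting
   quasinilpotents, which is quasinilpotent by the q-binomial expansion. *)

From Stdlib Require Import Reals Lra Lia.
From Stdlib Require Ncring Ncring_tac.
Open Scope R_scope.

(** * Complex numbers and real estimates *)

Lemma cabs_ge0 a : 0 <= cabs a.
Proof. apply sqrt_pos. Qed.

Lemma cabs_mul a b : cabs (cmul a b) = cabs a * cabs b.
Proof. unfold cabs, cmul; simpl. rewrite <- sqrt_mult by nra. f_equal; ring. Qed.

Lemma cabs_add a b : cabs (cadd a b) <= cabs a + cabs b.
Proof.
  destruct a as [a1 a2], b as [b1 b2]; unfold cabs, cadd; cbn [cRe cIm].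
  set (A := a1 ^ 2 + a2 ^ 2); set (B := b1 ^ 2 + b2 ^ 2).
  assert (HA : 0 <= A) by (unfold A; nra). assert (HB : 0 <= B) by (unfold B; nra).
  pose proof (sqrt_sqrt A HA); pose proof (sqrt_sqrt B HB).
  pose proof (sqrt_pos A); pose proof (sqrt_pos B).
  assert (cauchy_schwarz : a1 * b1 + a2 * b2 <= sqrt A * sqrt B).
  { rewrite <- sqrt_mult by auto.
    destruct (Rle_or_lt (a1 * b1 + a2 * b2) 0). { pose proof (sqrt_pos (A * B)); lra. }
    rewrite <- (sqrt_pow2 (a1 * b1 + a2 * b2)) by lra. apply sqrt_le_1_alt.
    unfold A, B. pose proof (pow2_ge_0 (a1 * b2 - a2 * b1)). nra. }
  rewrite <- (sqrt_pow2 (sqrt A + sqrt B)) by lra. apply sqrt_le_1_alt.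
  unfold A, B in *. nra.
Qed.

Lemma cabs_c0 : cabs c0 = 0.
Proof. unfold cabs, c0; cbn [cRe cIm]. replace (0 ^ 2 + 0 ^ 2) with 0 by ring. apply sqrt_0. Qed.

Lemma cabs_c1 : cabs c1 = 1.
Proof. unfold cabs, c1; cbn [cRe cIm]. replace (1 ^ 2 + 0 ^ 2) with 1 by ring. apply sqrt_1. Qed.

Lemma cnorm2_neq0 a : a <> c0 -> cRe a ^ 2 + cIm a ^ 2 <> 0.
Proof. intros Ha H; apply Ha; destruct a as [x y]; unfold c0; simpl in *; f_equal; nra. Qed.

Lemma cmulC a b : cmul a b = cmul b a.
Proof. unfold cmul; f_equal; ring. Qed.

Lemma cadd_mul0l a b : cadd a (cmul c0 b) = a.
Proof. destruct a; unfold cadd, cmul, c0; simpl; f_equal; ring. Qed.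

Fixpoint cpow (a : cplx) (n : nat) : cplx :=
  match n with O => c1 | S k => cmul (cpow a k) a end.

Lemma cabs_cpow a n : cabs (cpow a n) = cabs a ^ n.
Proof. induction n; simpl. apply cabs_c1. rewrite cabs_mul, IHn; ring. Qed.

Definition cinv (a : cplx) :=
  mkC (cRe a / (cRe a ^ 2 + cIm a ^ 2)) (- cIm a / (cRe a ^ 2 + cIm a ^ 2)).

Lemma cmulVl a : a <> c0 -> cmul (cinv a) a = c1.
Proof.
  intros Ha. pose proof (cnorm2_neq0 a Ha).
  unfold cmul, cinv, c1; cbn [cRe cIm]. f_equal; field; auto.
Qed.

Lemma INR_le_pow2 n : INR n <= 2 ^ n.
Proof.
  induction n. simpl; lra. rewrite S_INR. simpl.
  assert (1 <= 2 ^ n) by (apply pow_R1_Rle; lra). lra.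
Qed.

Lemma pow2_eventually_ge K : exists N, forall n, (N <= n)%nat -> K <= 2 ^ n.
Proof.
  destruct (INR_unbounded K) as [N HN]. exists N. intros n Hn.
  pose proof (INR_le_pow2 n). apply le_INR in Hn. lra.
Qed.

Lemma pow_le1 c n : 0 <= c <= 1 -> c ^ n <= 1.
Proof.
  intros H. induction n; simpl. lra.
  assert (0 <= c ^ n) by (apply pow_le; lra). nra.
Qed.

Lemma le_half_pow_eq0 x C : 0 <= x -> (forall k, (1 <= k)%nat -> x <= C * (/ 2) ^ k) -> x = 0.
Proof.
  intros Hx H. destruct Hx as [Hx|]; auto. exfalso.
  destruct (pow_lt_1_zero (/ 2)) with (y := x / (Rabs C + 1)) as [N HN].
  { rewrite Rabs_right; lra. } { apply Rdiv_lt_0_compat; [lra | pose proof (Rabs_pos C); lra]. }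
  set (k := Nat.max N 1). specialize (H k ltac:(lia)). specialize (HN k ltac:(lia)).
  rewrite Rabs_right in HN by (apply Rle_ge, pow_le; lra).
  assert (0 <= (/ 2) ^ k) by (apply pow_le; lra).
  pose proof (Rabs_pos C). pose proof (Rle_abs C).
  apply Rmult_lt_compat_l with (r := Rabs C + 1) in HN; [|lra].
  replace ((Rabs C + 1) * (x / (Rabs C + 1))) with x in HN by (field; lra). nra.
Qed.

Lemma geom_prefix_bound (f : nat -> R) d M : 0 < d ->
  exists K, 0 <= K /\ forall n, (n < M)%nat -> f n <= K * d ^ n.
Proof.
  intros Hd. induction M as [|M [K [HK IH]]].
  { exists 0. split; [lra | intros; lia]. }
  assert (HdM : 0 < d ^ M) by (apply pow_lt; auto).
  assert (0 <= Rabs (f M) / d ^ M)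
    by (apply Rmult_le_pos; [apply Rabs_pos | left; apply Rinv_0_lt_compat; auto]).
  exists (K + Rabs (f M) / d ^ M). split; [lra|].
  intros n Hn. assert (0 < d ^ n) by (apply pow_lt; auto).
  destruct (Nat.eq_dec n M) as [->|Hne].
  - rewrite Rmult_plus_distr_r. unfold Rdiv. rewrite Rmult_assoc, Rinv_l by lra.
    pose proof (Rle_abs (f M)). assert (0 <= K * d ^ M) by nra. lra.
  - specialize (IH n ltac:(lia)). nra.
Qed.

(** * Complex normed algebras *)

(* Unital, not necessarily complete: the common setting of [A] and of [M_2(A)]. *)
Record NormedAlg := {
  nalg :> Type;
  n0 : nalg; n1 : nalg;
  nadd : nalg -> nalg -> nalg; nopp : nalg -> nalg; nmul : nalg -> nalg -> nalg;
  nscal : cplx -> nalg -> nalg;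
  nnorm : nalg -> R;
  naddA : forall x y z, nadd x (nadd y z) = nadd (nadd x y) z;
  naddC : forall x y, nadd x y = nadd y x;
  nadd0 : forall x, nadd x n0 = x;
  naddN : forall x, nadd x (nopp x) = n0;
  nmulA : forall x y z, nmul x (nmul y z) = nmul (nmul x y) z;
  nmul1l : forall x, nmul n1 x = x;
  nmul1r : forall x, nmul x n1 = x;
  nmulDl : forall x y z, nmul (nadd x y) z = nadd (nmul x z) (nmul y z);
  nmulDr : forall x y z, nmul x (nadd y z) = nadd (nmul x y) (nmul x z);
  nscal1 : forall x, nscal c1 x = x;
  nscalA : forall a b x, nscal a (nscal b x) = nscal (cmul a b) x;
  nscalDl : forall a b x, nscal (cadd a b) x = nadd (nscal a x) (nscal b x);
  nscalMl : forall a x y, nscal a (nmul x y) = nmul (nscal a x) y;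
  nscalMr : forall a x y, nscal a (nmul x y) = nmul x (nscal a y);
  nnorm_ge0 : forall x, 0 <= nnorm x;
  nnorm_eq0 : forall x, nnorm x = 0 -> x = n0;
  nnormD : forall x y, nnorm (nadd x y) <= nnorm x + nnorm y;
  nnormZ : forall a x, nnorm (nscal a x) = cabs a * nnorm x;
  nnormM : forall x y, nnorm (nmul x y) <= nnorm x * nnorm y }.

Arguments n0 {_}. Arguments n1 {_}.

Declare Scope nalg_scope.
Delimit Scope nalg_scope with A.
Arguments nadd {_} _%_A _%_A. Arguments nmul {_} _%_A _%_A. Arguments nopp {_} _%_A.
Arguments nscal {_} _ _%_A. Arguments nnorm {_} _%_A.
Notation "x + y" := (nadd x y) : nalg_scope.
Notation "- x" := (nopp x) : nalg_scope.
Notation "x - y" := (nadd x (nopp y)) : nalg_scope.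
Notation "x * y" := (nmul x y) : nalg_scope.
Notation "a *: x" := (nscal a x) (at level 40) : nalg_scope.
Notation "x ^ n" := (powg nmul n1 x%A n%nat) : nalg_scope.

#[local] Instance nalg_ring_ops (N : NormedAlg) :
  @Ncring.Ring_ops N n0 n1 nadd nmul (fun x y => x - y)%A nopp eq := {}.
#[local] Instance nalg_ring (N : NormedAlg) : Ncring.Ring (Ro := nalg_ring_ops N).
Proof.
  constructor; try exact _; intros;
  cbv [Algebra_syntax.zero Algebra_syntax.one Algebra_syntax.addition
       Algebra_syntax.multiplication Algebra_syntax.subtraction Algebra_syntax.opposite
       Algebra_syntax.equality Ncring.zero_notation Ncring.one_notation Ncring.add_notation
       Ncring.mul_notation Ncring.sub_notation Ncring.opp_notation Ncring.eq_notation].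
  - rewrite naddC; apply nadd0.
  - apply naddC. - apply naddA. - apply nmul1l. - apply nmul1r. - apply nmulA.
  - apply nmulDl. - apply nmulDr. - reflexivity. - apply naddN.
Qed.

Ltac nring := Ncring_tac.non_commutative_ring.

Section NormedAlgTheory.
Variable N : NormedAlg.
Implicit Types (b c u v w x y z e : N) (a : cplx).

Definition quasinilpotent y := quasinil (@nmul N) n1 nnorm y.
Definition is_gd x xd := gdrazin (@nadd N) nmul nopp n1 nnorm x xd.
Definition nspi x xd : N := (n1 - x * xd)%A.
Arguments quasinilpotent _%_A. Arguments is_gd _%_A _%_A. Arguments nspi _%_A _%_A.

Lemma nmul0l x : (n0 * x = n0)%A. Proof. nring. Qed.
Lemma nmul0r x : (x * n0 = n0)%A. Proof. nring. Qed.

Lemma npowS x n : (x ^ S n = x ^ n * x)%A. Proof. reflexivity. Qed.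

Lemma npowSl x n : (x ^ S n = x * x ^ n)%A.
Proof.
  induction n. cbn [powg]; nring.
  rewrite (npowS x (S n)), IHn at 1. cbn [powg]; nring.
Qed.

Lemma npow_mul_eq0l x y k : (1 <= k)%nat -> (x * y = n0)%A -> (x ^ k * y = n0)%A.
Proof.
  intros Hk H. destruct k as [|k]; [lia|].
  rewrite npowS, <- nmulA, H. apply nmul0r.
Qed.

Lemma npow_mul_eq0r x y k : (1 <= k)%nat -> (y * x = n0)%A -> (y * x ^ k = n0)%A.
Proof.
  intros Hk H. destruct k as [|k]; [lia|].
  rewrite npowSl, nmulA, H. apply nmul0l.
Qed.

Lemma npowD x m n : (x ^ (m + n) = x ^ m * x ^ n)%A.
Proof.
  induction n. rewrite Nat.add_0_r; cbn [powg]; nring.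
  rewrite <- plus_n_Sm, !npowS, IHn; nring.
Qed.

Lemma npow_comm x y n : (x * y = y * x)%A -> (x ^ n * y = y * x ^ n)%A.
Proof.
  intros H. induction n; cbn [powg]. nring.
  transitivity (x ^ n * (x * y))%A. nring. rewrite H.
  transitivity (x ^ n * y * x)%A. nring. rewrite IHn; nring.
Qed.

Lemma npow_comm2 x y m n : (x * y = y * x)%A -> (x ^ m * y ^ n = y ^ n * x ^ m)%A.
Proof. intros H. apply npow_comm. symmetry. apply npow_comm. symmetry. exact H. Qed.

Lemma npowMc x y n : (x * y = y * x)%A -> ((x * y) ^ n = x ^ n * y ^ n)%A.
Proof.
  intros H. induction n; cbn [powg]. nring.
  rewrite IHn. transitivity (x ^ n * (y ^ n * x) * y)%A. nring.
  rewrite (npow_comm y x n (eq_sym H)). nring.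
Qed.

Lemma npow_idem e n : (e * e = e)%A -> (e ^ S n = e)%A.
Proof. intros H. induction n. cbn [powg]; nring. rewrite npowS, IHn; exact H. Qed.

Lemma npowMidem x e n : (e * e = e)%A -> (x * e = e * x)%A ->
  ((x * e) ^ S n = x ^ S n * e)%A.
Proof. intros He Hc. rewrite npowMc by exact Hc. rewrite (npow_idem e n He). reflexivity. Qed.

Lemma nnorm_pow x n : nnorm (x ^ S n) <= nnorm x ^ S n.
Proof.
  induction n. cbn [powg pow]. rewrite nmul1l. lra.
  rewrite npowS. eapply Rle_trans. apply nnormM.
  change (nnorm x ^ S (S n)) with (nnorm x * nnorm x ^ S n). rewrite (Rmult_comm (nnorm x)).
  apply Rmult_le_compat_r. apply nnorm_ge0. exact IHn.
Qed.

Lemma nscal_c0 x : (c0 *: x = n0)%A.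
Proof.
  assert (E : cadd c0 c0 = c0) by (unfold cadd, c0; cbn [cRe cIm]; f_equal; ring).
  pose proof (nscalDl N c0 c0 x) as H. rewrite E in H.
  transitivity (c0 *: x + c0 *: x - c0 *: x)%A. nring.
  rewrite <- H. apply naddN.
Qed.

Lemma nnorm0 : nnorm (@n0 N) = 0.
Proof. rewrite <- (nscal_c0 n0), nnormZ, cabs_c0; ring. Qed.

Lemma nscal0 a : (a *: @n0 N = n0)%A.
Proof. rewrite <- (nmul0l n0) at 1. rewrite nscalMr, nmul0l; reflexivity. Qed.


(** * Quasinilpotent elements *)

Lemma quasinilpotent_of_bound y :
  (forall d, 0 < d -> exists K M, forall n, (M <= n)%nat -> nnorm (y ^ n) <= K * d ^ n) ->
  quasinilpotent y.
Proof.
  intros H eps Heps. destruct (H (eps / 2)) as [K [M HM]]; [lra|].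
  destruct (pow2_eventually_ge K) as [M2 HM2]. exists (Nat.max M M2). intros n Hn.
  eapply Rle_trans; [apply HM; lia|].
  assert (0 <= (eps / 2) ^ n) by (apply pow_le; lra).
  replace (eps ^ n) with (2 ^ n * (eps / 2) ^ n)
    by (rewrite <- Rpow_mult_distr; f_equal; field).
  apply Rmult_le_compat_r; auto. apply HM2; lia.
Qed.

Lemma quasinilpotent_bound y : quasinilpotent y ->
  forall d, 0 < d -> exists K, 0 <= K /\ forall n, nnorm (y ^ n) <= K * d ^ n.
Proof.
  intros Hy d Hd. destruct (Hy d Hd) as [M HM].
  destruct (geom_prefix_bound (fun n => nnorm (y ^ n)) d M Hd) as [K [HK Hprefix]].
  exists (K + 1). split; [lra|]. intros n.
  assert (0 < d ^ n) by (apply pow_lt; auto).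
  destruct (Nat.lt_ge_cases n M) as [Hn|Hn].
  - specialize (Hprefix n Hn). simpl in Hprefix. nra.
  - specialize (HM n Hn). nra.
Qed.

Lemma eq0_of_quasinilpotent_dominated w y L C B :
  quasinilpotent y -> 0 < L -> 0 <= C -> 0 <= B ->
  (forall k, (1 <= k)%nat -> L ^ k * nnorm w <= C * B ^ k * nnorm (y ^ k)) -> w = n0.
Proof.
  intros Hy HL HC HB H. apply nnorm_eq0.
  set (d := L / (2 * (B + 1))).
  assert (Hd : 0 < d) by (unfold d; apply Rdiv_lt_0_compat; lra).
  assert (HBd : 0 <= B * d <= L * / 2).
  { assert (d * (2 * (B + 1)) = L) by (unfold d; field; lra). nra. }
  destruct (quasinilpotent_bound y Hy d Hd) as [K [HK Hbound]].
  apply (le_half_pow_eq0 _ (C * K)); [apply nnorm_ge0|]. intros k Hk.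
  assert (HLk : 0 < L ^ k) by (apply pow_lt; auto).
  assert (HBdk : (B * d) ^ k <= L ^ k * (/ 2) ^ k)
    by (rewrite <- Rpow_mult_distr; apply pow_incr; lra).
  assert (0 <= B ^ k) by (apply pow_le; auto).
  apply (Rmult_le_reg_l (L ^ k)); [auto|].
  eapply Rle_trans; [apply H; auto|].
  apply Rle_trans with (C * K * (B * d) ^ k).
  { rewrite Rpow_mult_distr.
    replace (C * K * (B ^ k * d ^ k)) with (C * B ^ k * (K * d ^ k)) by ring.
    apply Rmult_le_compat_l; [apply Rmult_le_pos; auto | apply Hbound]. }
  assert (0 <= C * K) by (apply Rmult_le_pos; auto). nra.
Qed.

Lemma quasinilpotent_of_sq y : quasinilpotent (y * y) -> quasinilpotent y.
Proof.
  intros Hyy. apply quasinilpotent_of_bound. intros d Hd.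
  destruct (quasinilpotent_bound _ Hyy (d * d)) as [K [HK Hbound]]; [nra|].
  assert (Heven : forall m, nnorm (y ^ (m + m)) <= K * d ^ (m + m)).
  { intros m. rewrite npowD, <- npowMc by reflexivity. rewrite pow_add, <- Rpow_mult_distr.
    apply Hbound. }
  pose proof (nnorm_ge0 N y).
  assert (0 <= K * nnorm y / d) by (apply Rmult_le_pos; [nra | left; apply Rinv_0_lt_compat; auto]).
  exists (K + K * nnorm y / d), 0%nat. intros n _.
  destruct (Nat.Even_or_Odd n) as [[m ->] | [m ->]];
    replace (2 * m)%nat with (m + m)%nat by lia;
    specialize (Heven m); assert (0 < d ^ (m + m)) by (apply pow_lt; auto).
  - nra.
  - rewrite Nat.add_1_r, npowS. eapply Rle_trans; [apply nnormM|].
    replace ((K + K * nnorm y / d) * d ^ S (m + m))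
      with (K * d ^ S (m + m) + K * d ^ (m + m) * nnorm y) by (simpl; field; lra).
    assert (0 <= K * d ^ S (m + m)) by (apply Rmult_le_pos; auto; apply pow_le; lra).
    assert (nnorm (y ^ (m + m)) * nnorm y <= K * d ^ (m + m) * nnorm y)
      by (apply Rmult_le_compat_r; auto).
    lra.
Qed.

(** * Generalized Drazin inverses *)

Section GDrazin.
Variables (x xd : N).
Hypothesis Hx : is_gd x xd.

Lemma gd_comm : (xd * x = x * xd)%A.
Proof. exact (proj1 Hx). Qed.

Lemma gd_idem : (x * xd * (x * xd) = x * xd)%A.
Proof.
  destruct Hx as [_ [H _]]. transitivity (x * (xd * x * xd))%A. nring. rewrite <- H. reflexivity.
Qed.

Lemma gd_sqr_mul : (xd * xd * x = xd)%A.
Proof.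
  destruct Hx as [_ [H _]]. transitivity (xd * (x * xd))%A. { rewrite <- gd_comm. nring. }
  transitivity (xd * x * xd)%A. nring. symmetry; exact H.
Qed.

Lemma gd_mul_sqr : (x * xd * xd = xd)%A.
Proof. rewrite <- gd_comm. symmetry. exact (proj1 (proj2 Hx)). Qed.

Lemma gd_spi_idem : (nspi x xd * nspi x xd = nspi x xd)%A.
Proof.
  unfold nspi. transitivity (n1 - x * xd - x * xd + x * xd * (x * xd))%A. nring.
  rewrite gd_idem. nring.
Qed.

Lemma gd_spi_comm : (x * nspi x xd = nspi x xd * x)%A.
Proof.
  unfold nspi. transitivity (x - x * (xd * x))%A. { rewrite gd_comm. nring. } nring.
Qed.

Lemma gd_mul_spi : (xd * nspi x xd = n0)%A.
Proof.
  destruct Hx as [_ [H _]]. unfold nspi.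
  transitivity (xd - xd * x * xd)%A. nring. rewrite <- H. nring.
Qed.

Lemma gd_spi_mul : (nspi x xd * xd = n0)%A.
Proof.
  destruct Hx as [_ [H _]]. unfold nspi.
  transitivity (xd - x * xd * xd)%A. nring. rewrite <- gd_comm, <- H. nring.
Qed.

Lemma gd_quasinilpotent_spi : quasinilpotent (x * nspi x xd).
Proof.
  destruct Hx as [_ [_ H]]. replace (x * nspi x xd)%A with (x - x * x * xd)%A
    by (unfold nspi; nring). exact H.
Qed.

Lemma gd_pow_expand k : (xd = xd ^ S k * x ^ k)%A.
Proof.
  induction k. cbn [powg]; nring.
  rewrite (npowSl xd (S k)), (npowS x k).
  transitivity (xd * (xd ^ S k * x ^ k) * x)%A. 2: nring.
  rewrite <- IHk. symmetry. exact gd_sqr_mul.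
Qed.

End GDrazin.

(* [z x] is idempotent, so [z x (1 - z y)] and [(1 - z y) z x] factor through arbitrarily
   high powers of the quasinilpotent [z (1 - z y)]. *)
Lemma gd_absorb_spi z x y : is_gd z x -> is_gd z y ->
  (z * x * nspi z y = n0)%A /\ (nspi z y * (z * x) = n0)%A.
Proof.
  intros Hx Hy. set (g := nspi z y).
  assert (Hzx : forall k, (z * x = z ^ S k * x ^ S k)%A).
  { intros k. rewrite <- (npow_idem _ k (gd_idem z x Hx)).
    apply npowMc. symmetry. exact (gd_comm z x Hx). }
  assert (Hxz : forall k, (z * x = x ^ S k * z ^ S k)%A).
  { intros k. rewrite (Hzx k). apply npow_comm2. symmetry. exact (gd_comm z x Hx). }
  assert (Hag : forall k, (z ^ S k * g = (z * g) ^ S k)%A).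
  { intros k. symmetry. apply npowMidem; [apply gd_spi_idem | apply gd_spi_comm]; exact Hy. }
  pose proof (gd_quasinilpotent_spi z y Hy) as Hq.
  assert (Hbound : forall n, (1 <= n)%nat ->
            nnorm (x ^ n) * nnorm ((z * g) ^ n) <= nnorm x ^ n * nnorm ((z * g) ^ n)).
  { intros [|k] Hk; [lia|]. apply Rmult_le_compat_r; [apply nnorm_ge0 | apply nnorm_pow]. }
  split; apply (eq0_of_quasinilpotent_dominated _ (z * g)%A 1 1 (nnorm x)); auto;
    try lra; try apply nnorm_ge0; intros [|k] Hk; try lia; rewrite pow1, !Rmult_1_l.
  - rewrite (Hxz k), <- nmulA, Hag. eapply Rle_trans; [apply nnormM | apply (Hbound (S k) Hk)].
  - rewrite (Hzx k), nmulA, <- (npow_comm z g (S k) (gd_spi_comm z y Hy)), Hag.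
    eapply Rle_trans; [apply nnormM|]. rewrite Rmult_comm. apply (Hbound (S k) Hk).
Qed.

Lemma gd_unique z x y : is_gd z x -> is_gd z y -> x = y.
Proof.
  intros Hx Hy.
  destruct (gd_absorb_spi z x y Hx Hy) as [_ Hxy].
  destruct (gd_absorb_spi z y x Hy Hx) as [Hyx _].
  assert (Eq : (z * x = z * y)%A).
  { transitivity (z * y * (z * x) + nspi z y * (z * x))%A. unfold nspi; nring.
    rewrite Hxy. transitivity (z * y * (z * x) + z * y * nspi z x)%A. 2: unfold nspi; nring.
    rewrite Hyx. reflexivity. }
  destruct Hx as [Hx1 [Hx2 _]]. destruct Hy as [Hy1 [Hy2 _]].
  rewrite Hx2. transitivity (x * (z * x))%A. nring. rewrite Eq.
  transitivity (x * z * y)%A. nring. rewrite Hx1, Eq, <- Hy1. symmetry; exact Hy2.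
Qed.

Lemma npow_mul_swap x y k : ((y * x) ^ S k = y * (x * y) ^ k * x)%A.
Proof.
  induction k. cbn [powg]; nring.
  rewrite npowS, IHk, (npowS (x * y)%A k). nring.
Qed.

Lemma quasinilpotent_mul_swap x y : quasinilpotent (x * y) -> quasinilpotent (y * x).
Proof.
  intros Hxy. apply quasinilpotent_of_bound. intros d Hd.
  destruct (quasinilpotent_bound _ Hxy d Hd) as [K [HK Hbound]].
  pose proof (nnorm_ge0 N x); pose proof (nnorm_ge0 N y).
  exists (nnorm y * K * nnorm x / d), 1%nat. intros [|k] Hk; [lia|].
  rewrite npow_mul_swap. eapply Rle_trans; [apply nnormM|].
  eapply Rle_trans; [apply Rmult_le_compat_r; [auto | apply nnormM]|].
  replace (nnorm y * K * nnorm x / d * d ^ S k) with (nnorm y * (K * d ^ k) * nnorm x)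
    by (simpl; field; lra).
  apply Rmult_le_compat_r; auto. apply Rmult_le_compat_l; auto.
Qed.

Lemma gd_cline b c w : is_gd (b * c) w -> is_gd (c * b) (c * (w * w) * b).
Proof.
  intros Hw. set (u := (b * c)%A) in *.
  pose proof (gd_sqr_mul u w Hw) as Hwwu. pose proof (gd_mul_sqr u w Hw) as Huww.
  split; [|split].
  - transitivity (c * (w * w * u) * b)%A. unfold u; nring. rewrite Hwwu.
    rewrite <- Huww at 1. unfold u; nring.
  - transitivity (c * ((w * w * u) * (u * w * w)) * b)%A. 2: unfold u; nring.
    rewrite Hwwu, Huww. nring.
  - replace (c * b - c * b * (c * b) * (c * (w * w) * b))%A with (c * nspi u w * b)%A.
    2:{ transitivity (c * b - c * (u * (u * w * w)) * b)%A. 2: unfold u; nring.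
        rewrite Huww. unfold nspi; nring. }
    apply quasinilpotent_mul_swap.
    replace (b * (c * nspi u w))%A with (u * nspi u w)%A by (unfold u; nring).
    exact (gd_quasinilpotent_spi u w Hw).
Qed.

Lemma gd_mul_swap b c w v : is_gd (b * c) w -> is_gd (c * b) v ->
  (b * v * c = b * c * w)%A /\ (c * w * b = c * b * v)%A.
Proof.
  intros Hw Hv. rewrite (gd_unique _ v _ Hv (gd_cline b c w Hw)).
  pose proof (gd_sqr_mul _ w Hw) as Hwwu. pose proof (gd_mul_sqr _ w Hw) as Huww.
  split.
  - transitivity (b * c * (w * w * (b * c)))%A. nring. rewrite Hwwu. reflexivity.
  - transitivity (c * (b * c * w * w) * b)%A. rewrite Huww. reflexivity. nring.
Qed.

(** * Sums of lam-commuting quasinilpotents *)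

Notation nsum := (psum (@nadd N) n0).

Lemma nsum_add (f g : nat -> N) m : nsum (fun k => f k + g k)%A m = (nsum f m + nsum g m)%A.
Proof. induction m; simpl. nring. rewrite IHm. nring. Qed.

Lemma nsum_mulr (f : nat -> N) x m : (nsum f m * x)%A = nsum (fun k => f k * x)%A m.
Proof. induction m; simpl. nring. rewrite <- IHm. nring. Qed.

Lemma nsum_shift (f : nat -> N) m : nsum f (S m) = (f 0%nat + nsum (fun k => f (S k)) m)%A.
Proof.
  induction m. simpl. nring.
  change (nsum f (S (S m))) with (nsum f (S m) + f (S m))%A. rewrite IHm. simpl. nring.
Qed.

Lemma nsum_ext (f g : nat -> N) m : (forall k, (k < m)%nat -> f k = g k) -> nsum f m = nsum g m.
Proof.
  induction m; intros H; simpl. reflexivity.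
  rewrite IHm by (intros; apply H; lia). rewrite H by lia. reflexivity.
Qed.

Lemma nsum_zero m : nsum (fun _ => n0) m = n0.
Proof. induction m; simpl. reflexivity. rewrite IHm. nring. Qed.

Lemma nnorm_sum (f : nat -> N) m B : (forall k, (k < m)%nat -> nnorm (f k) <= B) ->
  nnorm (nsum f m) <= INR m * B.
Proof.
  induction m; intros H. simpl. rewrite nnorm0. simpl; lra.
  cbn [psum]. eapply Rle_trans. apply nnormD. rewrite S_INR.
  assert (nnorm (nsum f m) <= INR m * B) by (apply IHm; intros; apply H; lia).
  specialize (H m ltac:(lia)). lra.
Qed.

Section QCommuting.
Variables (x y : N) (q : cplx).
Hypothesis Hq : cabs q <= 1.
Hypothesis Hxy : (x * y = q *: (y * x))%A.

(* Gaussian binomial coefficients: [(x + y)^n = sum_k qbinom n k y^(n-k) x^k]. *)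
Fixpoint qbinom (n k : nat) : cplx :=
  match n, k with
  | O, O => c1
  | O, S _ => c0
  | S n', O => qbinom n' O
  | S n', S k' => cadd (qbinom n' k') (cmul (qbinom n' (S k')) (cpow q (S k')))
  end.

Lemma qbinom_gt n k : (n < k)%nat -> qbinom n k = c0.
Proof.
  revert k; induction n; intros k Hk; destruct k; try lia; try reflexivity.
  simpl. rewrite (IHn k), (IHn (S k)) by lia. apply cadd_mul0l.
Qed.

Lemma cabs_qbinom n k : cabs (qbinom n k) <= 2 ^ n.
Proof.
  revert k; induction n; intros k; destruct k; cbn [qbinom].
  - rewrite cabs_c1; simpl; lra.
  - rewrite cabs_c0; simpl; lra.
  - specialize (IHn 0%nat). assert (1 <= 2 ^ n) by (apply pow_R1_Rle; lra). simpl; lra.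
  - eapply Rle_trans. apply cabs_add. rewrite cabs_mul, cabs_cpow.
    assert (cabs q ^ S k <= 1) by (apply pow_le1; split; [apply cabs_ge0 | auto]).
    assert (0 <= cabs q ^ S k) by (apply pow_le, cabs_ge0).
    pose proof (IHn k). pose proof (IHn (S k)). pose proof (cabs_ge0 (qbinom n (S k))).
    change (2 ^ S n) with (2 * 2 ^ n). nra.
Qed.

Lemma qcomm_pow k : (x ^ k * y = cpow q k *: (y * x ^ k))%A.
Proof.
  induction k. cbn [powg cpow]. rewrite nscal1. nring.
  rewrite npowS. transitivity (x ^ k * (x * y))%A. nring. rewrite Hxy, <- nscalMr.
  transitivity (q *: (x ^ k * y * x))%A. f_equal; nring.
  rewrite IHk, <- nscalMl, nscalA, cmulC. f_equal. cbn [powg]. nring.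
Qed.

Definition qterm n k := (qbinom n k *: (y ^ (n - k) * x ^ k))%A.

Lemma qterm_gt n k : (n < k)%nat -> qterm n k = n0.
Proof. intros. unfold qterm. rewrite qbinom_gt by auto. apply nscal_c0. Qed.

Lemma qterm_S0 n : qterm (S n) 0 = (qterm n 0 * y)%A.
Proof.
  unfold qterm. rewrite <- nscalMl. cbn [qbinom]. f_equal.
  rewrite !Nat.sub_0_r. cbn [powg]. nring.
Qed.

Lemma qterm_SS n k : qterm (S n) (S k) = (qterm n k * x + qterm n (S k) * y)%A.
Proof.
  unfold qterm. rewrite <- !nscalMl. cbn [qbinom]. rewrite Nat.sub_succ.
  destruct (Nat.lt_ge_cases k n) as [Hkn|Hkn].
  - replace (n - k)%nat with (S (n - S k)) by lia. set (j := (n - S k)%nat).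
    rewrite nscalDl, <- nscalA. f_equal.
    + f_equal. rewrite (npowS x k). nring.
    + f_equal. symmetry. transitivity (y ^ j * (x ^ S k * y))%A. nring.
      rewrite qcomm_pow, <- nscalMr. f_equal. rewrite (npowS y j). nring.
  - rewrite (qbinom_gt n (S k)) by lia. rewrite cadd_mul0l, nscal_c0, nadd0. f_equal.
    rewrite (npowS x k). nring.
Qed.

Lemma qbinomial n m : (n < m)%nat -> ((x + y) ^ n = nsum (qterm n) m)%A.
Proof.
  revert m. induction n; intros m Hm; destruct m as [|m]; try lia.
  - rewrite nsum_shift, (nsum_ext _ (fun _ => n0)) by (intros; apply qterm_gt; lia).
    rewrite nsum_zero. unfold qterm. cbn [qbinom powg]. rewrite nscal1. nring.
  - rewrite npowS, (IHn m) by lia. rewrite nsum_shift, qterm_S0.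
    rewrite (nsum_ext (fun k => qterm (S n) (S k))
               (fun k => qterm n k * x + qterm n (S k) * y)%A) by (intros; apply qterm_SS).
    rewrite nsum_add.
    assert (E : nsum (fun k => qterm n k * y)%A m = nsum (fun k => qterm n k * y)%A (S m)).
    { simpl. rewrite (qterm_gt n m) by lia. rewrite nmul0l. nring. }
    rewrite nmulDr, !nsum_mulr, E, nsum_shift. nring.
Qed.

Lemma nnorm_qterm Kx Ky d n k : 0 <= Kx -> 0 <= Ky -> 0 < d ->
  (forall j, nnorm (x ^ j) <= Kx * d ^ j) -> (forall j, nnorm (y ^ j) <= Ky * d ^ j) ->
  nnorm (qterm n k) <= 2 ^ n * Ky * Kx * d ^ n.
Proof.
  intros HKx HKy Hd Bx By.
  assert (0 <= 2 ^ n * Ky * Kx * d ^ n)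
    by (repeat apply Rmult_le_pos; auto; apply pow_le; lra).
  destruct (Nat.lt_ge_cases n k) as [Hnk|Hkn].
  { rewrite qterm_gt, nnorm0 by auto. auto. }
  unfold qterm. rewrite nnormZ. eapply Rle_trans.
  { apply Rmult_le_compat_r. apply nnorm_ge0. apply cabs_qbinom. }
  replace (2 ^ n * Ky * Kx * d ^ n) with (2 ^ n * ((Ky * d ^ (n - k)) * (Kx * d ^ k))).
  2:{ assert (E : d ^ n = d ^ (n - k) * d ^ k)
        by (rewrite <- pow_add, Nat.sub_add by auto; reflexivity).
      rewrite E. ring. }
  apply Rmult_le_compat_l. apply pow_le; lra.
  eapply Rle_trans. apply nnormM. apply Rmult_le_compat; auto using nnorm_ge0.
Qed.

Lemma quasinilpotent_add_qcomm : quasinilpotent x -> quasinilpotent y -> quasinilpotent (x + y).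
Proof.
  intros Hx Hy. apply quasinilpotent_of_bound. intros e He.
  set (d := e / 4). assert (Hd : 0 < d) by (unfold d; lra).
  destruct (quasinilpotent_bound x Hx d Hd) as [Kx [HKx Bx]].
  destruct (quasinilpotent_bound y Hy d Hd) as [Ky [HKy By]].
  exists (2 * Ky * Kx), 0%nat. intros n _.
  rewrite (qbinomial n (S n)) by lia.
  eapply Rle_trans. apply nnorm_sum. intros k _. apply (nnorm_qterm Kx Ky d n k); auto.
  pose proof (INR_le_pow2 (S n)).
  assert (0 <= 2 ^ n * Ky * Kx * d ^ n)
    by (repeat apply Rmult_le_pos; auto; apply pow_le; lra).
  eapply Rle_trans. apply Rmult_le_compat_r; eauto.
  replace e with (2 * 2 * d) by (unfold d; field).
  rewrite !Rpow_mult_distr. simpl. lra.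
Qed.

End QCommuting.

(* Exchanging [x] and [y] replaces [a] by [a^-1], so one may assume [|a| <= 1]. *)
Lemma quasinilpotent_add x y a : a <> c0 -> (x * y = a *: (y * x))%A ->
  quasinilpotent x -> quasinilpotent y -> quasinilpotent (x + y).
Proof.
  intros Ha H Hx Hy. destruct (Rle_or_lt (cabs a) 1) as [Hle | Hgt].
  - exact (quasinilpotent_add_qcomm x y a Hle H Hx Hy).
  - rewrite naddC. apply (quasinilpotent_add_qcomm y x (cinv a)); auto.
    + pose proof (cabs_mul (cinv a) a) as E. rewrite cmulVl, cabs_c1 in E by auto.
      pose proof (cabs_ge0 (cinv a)). nra.
    + rewrite H, nscalA, cmulVl, nscal1 by auto. reflexivity.
Qed.

(* [xd y = xd^(k+1) x^k y = q^k xd^(k+1) y (x x^pi)^k] for every [k]. *)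
Lemma gd_mul_eq0_of_qcomm x xd y q : is_gd x xd -> (x * y = q *: (y * x))%A ->
  (y * nspi x xd = y)%A -> (xd * y = n0)%A.
Proof.
  intros Hx Hxy Hy. set (p := nspi x xd) in *.
  assert (Hyp : forall k, (y * x ^ k = y * (x * p) ^ k)%A).
  { intros [|k]; [reflexivity|].
    rewrite npowMidem by (apply gd_spi_idem || apply gd_spi_comm; exact Hx).
    rewrite (npow_comm x p (S k) (gd_spi_comm x xd Hx)), <- Hy at 1. nring. }
  apply (eq0_of_quasinilpotent_dominated _ (x * p)%A 1 (nnorm xd * nnorm y) (cabs q * nnorm xd));
    try lra; try (repeat apply Rmult_le_pos; auto using nnorm_ge0, cabs_ge0).
  { exact (gd_quasinilpotent_spi x xd Hx). }
  intros k _. rewrite pow1, Rmult_1_l.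
  rewrite (gd_pow_expand x xd Hx k) at 1.
  rewrite <- nmulA, (qcomm_pow x y q Hxy k). rewrite <- nscalMr, nnormZ, cabs_cpow, Hyp.
  assert (Hbound : nnorm (xd ^ S k * (y * (x * p) ^ k))
                   <= nnorm xd ^ S k * (nnorm y * nnorm ((x * p) ^ k))).
  { eapply Rle_trans; [apply nnormM|]. apply Rmult_le_compat;
      auto using nnorm_ge0, Rmult_le_pos, nnorm_pow, nnormM. }
  pose proof (pow_le _ k (cabs_ge0 q)).
  apply Rle_trans with (cabs q ^ k * (nnorm xd ^ S k * (nnorm y * nnorm ((x * p) ^ k)))).
  { apply Rmult_le_compat_l; auto. }
  rewrite Rpow_mult_distr. simpl. nra.
Qed.

End NormedAlgTheory.

Arguments quasinilpotent {N} _%_A. Arguments is_gd {N} _%_A _%_A. Arguments nspi {N} _%_A _%_A.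

Definition nalg_op (N : NormedAlg) : NormedAlg := {|
  nalg := N; n0 := n0; n1 := n1; nadd := nadd; nopp := nopp;
  nmul := fun x y => nmul y x; nscal := nscal; nnorm := nnorm;
  naddA := naddA N; naddC := naddC N; nadd0 := nadd0 N; naddN := naddN N;
  nmulA := fun x y z => eq_sym (nmulA N z y x);
  nmul1l := nmul1r N; nmul1r := nmul1l N;
  nmulDl := fun x y z => nmulDr N z x y; nmulDr := fun x y z => nmulDl N y z x;
  nscal1 := nscal1 N; nscalA := nscalA N; nscalDl := nscalDl N;
  nscalMl := fun a x y => nscalMr N a y x; nscalMr := fun a x y => nscalMl N a y x;
  nnorm_ge0 := nnorm_ge0 N; nnorm_eq0 := nnorm_eq0 N; nnormD := nnormD N; nnormZ := nnormZ N;
  nnormM := fun x y => Rle_trans _ _ _ (nnormM N y x) (Req_le _ _ (Rmult_comm _ _)) |}.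

Lemma npow_op (N : NormedAlg) (x : N) n :
  powg (@nmul (nalg_op N)) n1 x n = (x ^ n)%A.
Proof. induction n; cbn [powg]. reflexivity. rewrite IHn. exact (eq_sym (npowSl N x n)). Qed.

Lemma gd_op (N : NormedAlg) (x xd : N) : is_gd x xd -> @is_gd (nalg_op N) x xd.
Proof.
  intros Hx. pose proof Hx as [Hcomm [Hxd _]]. split; [|split].
  - symmetry; exact Hcomm.
  - cbn. rewrite nmulA. exact Hxd.
  - intros e He. destruct (gd_quasinilpotent_spi N x xd Hx e He) as [M HM].
    exists M. intros n Hn. rewrite npow_op. cbn -[powg].
    replace (x - xd * (x * x))%A with (x * nspi x xd)%A; [auto|].
    unfold nspi. transitivity (x - x * (x * xd))%A. nring.
    rewrite <- Hcomm. transitivity (x - x * xd * x)%A. nring. rewrite <- Hcomm. nring.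
Qed.

Lemma gd_mul_eq0_of_qcomm_r (N : NormedAlg) (x xd y : N) q : is_gd x xd ->
  (y * x = q *: (x * y))%A -> (nspi x xd * y = y)%A -> (y * xd = n0)%A.
Proof.
  intros Hx Hxy Hy. apply (gd_mul_eq0_of_qcomm (nalg_op N) x xd y q (gd_op N x xd Hx)); cbn.
  - exact Hxy.
  - rewrite (gd_comm N x xd Hx). exact Hy.
Qed.

(** * The twisted relation [P Q = lam P^pi Q P Q^pi] *)

(* For block matrices [P = diag(a, d)] and [Q = antidiag(b, c)] the entries of this relation are
   exactly the hypotheses [a b = lam a^pi b d (c b)^pi] and [d c = lam d^pi c a (b c)^pi]. *)
Section Twisted.
Variables (N : NormedAlg) (P Pd Q Qd : N) (lam : cplx).
Hypotheses (Hlam : lam <> c0) (HP : is_gd P Pd) (HQ : is_gd Q Qd).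
Hypothesis Htw : (P * Q = lam *: (nspi P Pd * Q * P * nspi Q Qd))%A.

Lemma twisted_PdQ : (Pd * Q = n0)%A.
Proof.
  rewrite <- (gd_sqr_mul N P Pd HP).
  transitivity (Pd * Pd * (P * Q))%A. nring.
  rewrite Htw, <- nscalMr.
  transitivity (lam *: (Pd * (Pd * nspi P Pd) * Q * P * nspi Q Qd))%A. f_equal; nring.
  rewrite (gd_mul_spi N P Pd HP), nmul0r, !nmul0l. apply nscal0.
Qed.

Lemma twisted_PQd : (P * Qd = n0)%A.
Proof.
  rewrite <- (gd_mul_sqr N Q Qd HQ).
  transitivity (P * Q * (Qd * Qd))%A. nring.
  rewrite Htw, <- nscalMl.
  transitivity (lam *: (nspi P Pd * Q * P * (nspi Q Qd * Qd) * Qd))%A. f_equal; nring.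
  rewrite (gd_spi_mul N Q Qd HQ), nmul0r, !nmul0l. apply nscal0.
Qed.

Lemma twisted_spiP_Q : (nspi P Pd * Q = Q)%A.
Proof.
  unfold nspi. transitivity (Q - P * (Pd * Q))%A. nring. rewrite twisted_PdQ. nring.
Qed.

Lemma twisted_P_spiQ : (P * nspi Q Qd = P)%A.
Proof.
  unfold nspi. transitivity (P - P * (Qd * Q))%A. { rewrite (gd_comm N Q Qd HQ). nring. }
  transitivity (P - P * Qd * Q)%A. nring. rewrite twisted_PQd. nring.
Qed.

Lemma twisted_qcomm : (P * Q = lam *: (Q * P))%A.
Proof.
  rewrite Htw at 1. f_equal.
  transitivity (nspi P Pd * Q * (P * nspi Q Qd))%A. nring.
  rewrite twisted_spiP_Q, twisted_P_spiQ. reflexivity.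
Qed.

Lemma twisted_qcomm_inv : (Q * P = cinv lam *: (P * Q))%A.
Proof. rewrite twisted_qcomm, nscalA, cmulVl, nscal1 by exact Hlam. reflexivity. Qed.

Lemma twisted_QdP : (Qd * P = n0)%A.
Proof.
  exact (gd_mul_eq0_of_qcomm N Q Qd P _ HQ twisted_qcomm_inv twisted_P_spiQ).
Qed.

Lemma twisted_QPd : (Q * Pd = n0)%A.
Proof.
  exact (gd_mul_eq0_of_qcomm_r N P Pd Q _ HP twisted_qcomm_inv twisted_spiP_Q).
Qed.

Lemma twisted_gd_add : is_gd (P + Q) (Pd + Qd).
Proof.
  pose proof HP as [HP1 [HP2 _]]. pose proof HQ as [HQ1 [HQ2 _]].
  pose proof twisted_PdQ as E1. pose proof twisted_PQd as E2.
  pose proof twisted_QdP as E3. pose proof twisted_QPd as E4.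
  split; [|split].
  - transitivity (Pd * P + Pd * Q + (Qd * P + Qd * Q))%A. nring.
    rewrite E1, E3, HP1, HQ1.
    transitivity (P * Pd + P * Qd + (Q * Pd + Q * Qd))%A. 2: nring.
    rewrite E2, E4. nring.
  - transitivity (Pd * P * Pd + Pd * (P * Qd) + Pd * Q * (Pd + Qd)
                  + Qd * P * (Pd + Qd) + Qd * (Q * Pd) + Qd * Q * Qd)%A.
    2: nring.
    rewrite E1, E2, E3, E4, <- HP2, <- HQ2. nring.
  - replace (P + Q - (P + Q) * (P + Q) * (Pd + Qd))%A
      with (P * nspi P Pd + Q * nspi Q Qd)%A.
    2:{ transitivity (P + Q - (P * P * Pd + P * (P * Qd) + P * (Q * Pd) + P * (Q * Qd)
                      + Q * (P * Pd) + Q * (P * Qd) + Q * (Q * Pd) + Q * Q * Qd))%A.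
        2: nring.
        rewrite <- HQ1, <- HP1. replace (P * (Qd * Q))%A with (P * Qd * Q)%A by nring.
        replace (Q * (Pd * P))%A with (Q * Pd * P)%A by nring.
        rewrite E2, E4. unfold nspi. nring. }
    apply (quasinilpotent_add N _ _ lam Hlam).
    + transitivity (P * Q)%A.
      { transitivity (P * (nspi P Pd * Q * nspi Q Qd))%A. nring.
        rewrite twisted_spiP_Q, (gd_spi_comm N Q Qd HQ), nmulA, twisted_P_spiQ.
        reflexivity. }
      rewrite twisted_qcomm. f_equal.
      transitivity (Q * (nspi Q Qd * P) * nspi P Pd)%A. 2: nring.
      replace (nspi Q Qd * P)%A with P
        by (unfold nspi; transitivity (P - Q * (Qd * P))%A; [rewrite E3|]; nring).
      assert (HQp : (Q * nspi P Pd = Q)%A).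
      { unfold nspi. transitivity (Q - Q * (Pd * P))%A. { rewrite HP1. nring. }
        transitivity (Q - Q * Pd * P)%A. nring. rewrite E4. nring. }
      rewrite <- nmulA, (gd_spi_comm N P Pd HP), nmulA, HQp. reflexivity.
    + exact (gd_quasinilpotent_spi N P Pd HP).
    + exact (gd_quasinilpotent_spi N Q Qd HQ).
Qed.

Lemma twisted_drazin_split : (nspi Q Qd * Pd + Qd * nspi P Pd = Pd + Qd)%A.
Proof.
  unfold nspi. transitivity (Pd + Qd - Qd * (Q * Pd) - Qd * P * Pd)%A.
  { rewrite <- (gd_comm N Q Qd HQ). nring. }
  rewrite twisted_QPd, twisted_QdP. nring.
Qed.

End Twisted.

(** * Banach algebras and 2x2 matrices *)

#[local] Instance cbalg_ring_ops (A : CBanachAlg) :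
  @Ncring.Ring_ops A bzero bone badd bmul bsub bopp eq := {}.
#[local] Instance cbalg_ring (A : CBanachAlg) : Ncring.Ring (Ro := cbalg_ring_ops A).
Proof.
  constructor; try exact _; intros;
  cbv [Algebra_syntax.zero Algebra_syntax.one Algebra_syntax.addition
       Algebra_syntax.multiplication Algebra_syntax.subtraction Algebra_syntax.opposite
       Algebra_syntax.equality Ncring.zero_notation Ncring.one_notation Ncring.add_notation
       Ncring.mul_notation Ncring.sub_notation Ncring.opp_notation Ncring.eq_notation].
  - rewrite baddC; apply badd0.
  - apply baddC. - apply baddA. - apply bmul1l. - apply bmul1r. - apply bmulA.
  - apply bmulDl. - apply bmulDr. - reflexivity. - apply baddN.
Qed.

Definition cbalg (A : CBanachAlg) : NormedAlg := {|
  nalg := A; n0 := bzero; n1 := bone; nadd := badd; nmul := bmul; nopp := bopp;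
  nscal := bscal; nnorm := bnorm;
  naddA := baddA A; naddC := baddC A; nadd0 := badd0 A; naddN := baddN A; nmulA := bmulA A;
  nmul1l := bmul1l A; nmul1r := bmul1r A; nmulDl := bmulDl A; nmulDr := bmulDr A;
  nscal1 := bscal1 A; nscalA := bscalA A; nscalDl := bscalDl A;
  nscalMl := bscalMl A; nscalMr := bscalMr A;
  nnorm_ge0 := bnorm_ge0 A; nnorm_eq0 := bnorm_eq0 A; nnormD := bnormD A;
  nnormZ := bnormZ A; nnormM := bnormM A |}.

#[local] Arguments m11 {A}. #[local] Arguments m12 {A}.
#[local] Arguments m21 {A}. #[local] Arguments m22 {A}.

Section Matrices.
Variable A : CBanachAlg.
Implicit Types (X Y Z : M2 A).

Definition m2scal a X :=
  mkM2 (bscal a (m11 X)) (bscal a (m12 X)) (bscal a (m21 X)) (bscal a (m22 X)).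

Ltac m2_ring := intros; repeat match goal with X : M2 A |- _ => destruct X end;
  unfold m2add, m2mul, m2opp, m2zero, m2one, m2scal; cbn; f_equal; nring.

Lemma m2addA X Y Z : m2add X (m2add Y Z) = m2add (m2add X Y) Z. Proof. m2_ring. Qed.
Lemma m2addC X Y : m2add X Y = m2add Y X. Proof. m2_ring. Qed.
Lemma m2add0 X : m2add X (m2zero A) = X. Proof. m2_ring. Qed.
Lemma m2addN X : m2add X (m2opp A X) = m2zero A. Proof. m2_ring. Qed.
Lemma m2mulA X Y Z : m2mul X (m2mul Y Z) = m2mul (m2mul X Y) Z. Proof. m2_ring. Qed.
Lemma m2mul1l X : m2mul m2one X = X. Proof. m2_ring. Qed.
Lemma m2mul1r X : m2mul X m2one = X. Proof. m2_ring. Qed.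
Lemma m2mulDl X Y Z : m2mul (m2add X Y) Z = m2add (m2mul X Z) (m2mul Y Z). Proof. m2_ring. Qed.
Lemma m2mulDr X Y Z : m2mul X (m2add Y Z) = m2add (m2mul X Y) (m2mul X Z). Proof. m2_ring. Qed.

Lemma m2scal1 X : m2scal c1 X = X.
Proof. destruct X; unfold m2scal; cbn; rewrite !bscal1; reflexivity. Qed.
Lemma m2scalA a b X : m2scal a (m2scal b X) = m2scal (cmul a b) X.
Proof. destruct X; unfold m2scal; cbn; rewrite !bscalA; reflexivity. Qed.
Lemma m2scalDl a b X : m2scal (cadd a b) X = m2add (m2scal a X) (m2scal b X).
Proof. destruct X; unfold m2scal, m2add; cbn; rewrite !bscalDl; reflexivity. Qed.
Lemma m2scalMl a X Y : m2scal a (m2mul X Y) = m2mul (m2scal a X) Y.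
Proof. destruct X, Y; unfold m2scal, m2mul; cbn; rewrite !bscalDr, !bscalMl; reflexivity. Qed.
Lemma m2scalMr a X Y : m2scal a (m2mul X Y) = m2mul X (m2scal a Y).
Proof. destruct X, Y; unfold m2scal, m2mul; cbn; rewrite !bscalDr, !bscalMr; reflexivity. Qed.

Lemma m2norm_ge0 X : 0 <= m2norm A X.
Proof.
  destruct X as [x1 x2 x3 x4]; unfold m2norm; cbn.
  pose proof (bnorm_ge0 A x1); pose proof (bnorm_ge0 A x2).
  pose proof (bnorm_ge0 A x3); pose proof (bnorm_ge0 A x4). lra.
Qed.

Lemma m2norm_eq0 X : m2norm A X = 0 -> X = m2zero A.
Proof.
  destruct X as [x1 x2 x3 x4]; unfold m2norm; cbn. intros H.
  pose proof (bnorm_ge0 A x1); pose proof (bnorm_ge0 A x2).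
  pose proof (bnorm_ge0 A x3); pose proof (bnorm_ge0 A x4).
  unfold m2zero. f_equal; apply bnorm_eq0; lra.
Qed.

Lemma m2normD X Y : m2norm A (m2add X Y) <= m2norm A X + m2norm A Y.
Proof.
  destruct X as [x1 x2 x3 x4], Y as [y1 y2 y3 y4]; unfold m2norm, m2add; cbn.
  pose proof (bnormD A x1 y1); pose proof (bnormD A x2 y2).
  pose proof (bnormD A x3 y3); pose proof (bnormD A x4 y4). lra.
Qed.

Lemma m2normZ a X : m2norm A (m2scal a X) = cabs a * m2norm A X.
Proof. destruct X; unfold m2norm, m2scal; cbn; rewrite !bnormZ; ring. Qed.

Lemma m2normM X Y : m2norm A (m2mul X Y) <= m2norm A X * m2norm A Y.
Proof.
  destruct X as [x1 x2 x3 x4], Y as [y1 y2 y3 y4]; unfold m2norm, m2mul; cbn.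
  assert (Hentry : forall p1 p2 q1 q2 : A,
    bnorm (badd (bmul p1 q1) (bmul p2 q2)) <= bnorm p1 * bnorm q1 + bnorm p2 * bnorm q2).
  { intros. eapply Rle_trans; [apply bnormD|].
    pose proof (bnormM A p1 q1); pose proof (bnormM A p2 q2). lra. }
  pose proof (Hentry x1 x2 y1 y3); pose proof (Hentry x1 x2 y2 y4).
  pose proof (Hentry x3 x4 y1 y3); pose proof (Hentry x3 x4 y2 y4).
  pose proof (bnorm_ge0 A x1); pose proof (bnorm_ge0 A x2).
  pose proof (bnorm_ge0 A x3); pose proof (bnorm_ge0 A x4).
  pose proof (bnorm_ge0 A y1); pose proof (bnorm_ge0 A y2).
  pose proof (bnorm_ge0 A y3); pose proof (bnorm_ge0 A y4).
  set (a1 := bnorm x1) in *; set (a2 := bnorm x2) in *.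
  set (a3 := bnorm x3) in *; set (a4 := bnorm x4) in *.
  set (b1 := bnorm y1) in *; set (b2 := bnorm y2) in *.
  set (b3 := bnorm y3) in *; set (b4 := bnorm y4) in *.
  assert (0 <= a1 * b2 + a1 * b4 + a2 * b1 + a2 * b3 + a3 * b2 + a3 * b4 + a4 * b1 + a4 * b3)
    by (repeat apply Rplus_le_le_0_compat; apply Rmult_le_pos; auto).
  nra.
Qed.

Definition m2alg : NormedAlg := {|
  nalg := M2 A; n0 := m2zero A; n1 := m2one; nadd := m2add; nmul := m2mul; nopp := m2opp A;
  nscal := m2scal; nnorm := m2norm A;
  naddA := m2addA; naddC := m2addC; nadd0 := m2add0; naddN := m2addN; nmulA := m2mulA;
  nmul1l := m2mul1l; nmul1r := m2mul1r; nmulDl := m2mulDl; nmulDr := m2mulDr;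
  nscal1 := m2scal1; nscalA := m2scalA; nscalDl := m2scalDl;
  nscalMl := m2scalMl; nscalMr := m2scalMr;
  nnorm_ge0 := m2norm_ge0; nnorm_eq0 := m2norm_eq0; nnormD := m2normD;
  nnormZ := m2normZ; nnormM := m2normM |}.

End Matrices.

Canonical cbalg.
Canonical m2alg.

Lemma sq_mul_spi (N : NormedAlg) (x xd : N) : (xd * x = x * xd)%A -> xd = (xd * x * xd)%A ->
  (x * nspi x xd * (x * nspi x xd) = x * x * nspi x xd)%A.
Proof.
  intros Hcomm Hxd. set (p := nspi x xd).
  assert (Hxp : (x * p = p * x)%A).
  { unfold p, nspi. transitivity (x - x * (xd * x))%A. { rewrite Hcomm. nring. } nring. }
  assert (Hpp : (p * p = p)%A).
  { unfold p, nspi. transitivity (n1 - x * xd - x * xd + x * (xd * x * xd))%A. nring.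
    rewrite <- Hxd. nring. }
  transitivity (x * (p * x) * p)%A. nring.
  rewrite <- Hxp. transitivity (x * x * (p * p))%A. nring. rewrite Hpp. reflexivity.
Qed.

Section MatrixLemmas.
Variable A : CBanachAlg.
Implicit Types (X Y : M2 A) (a b c d : A).

Ltac m2_cbn := cbn; unfold m2mul, m2add, m2opp, m2one, m2scal; cbn.

Lemma m2mul0l X : m2mul (m2zero A) X = m2zero A. Proof. exact (nmul0l (m2alg A) X). Qed.
Lemma m2mul0r X : m2mul X (m2zero A) = m2zero A. Proof. exact (nmul0r (m2alg A) X). Qed.

Lemma m2pow_mul_eq0l X Y k : (1 <= k)%nat -> m2mul X Y = m2zero A ->
  m2mul (m2pow X k) Y = m2zero A.
Proof. exact (npow_mul_eq0l (m2alg A) X Y k). Qed.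

Lemma m2pow_mul_eq0r X Y k : (1 <= k)%nat -> m2mul Y X = m2zero A ->
  m2mul Y (m2pow X k) = m2zero A.
Proof. exact (npow_mul_eq0r (m2alg A) X Y k). Qed.

Lemma m2series_of_zero (f : nat -> M2 A) : (forall n, f n = m2zero A) -> m2series f (m2zero A).
Proof.
  intros Hf eps Heps. exists 0%nat. intros n _.
  assert (E : psum m2add (m2zero A) f n = m2zero A).
  { induction n; cbn. reflexivity. rewrite IHn, Hf. apply m2add0. }
  rewrite E. unfold m2sub. rewrite m2addN, (nnorm0 (m2alg A) : m2norm A (m2zero A) = 0).
  exact Heps.
Qed.

Lemma m2_diag_pow a d n : (mkM2 a bzero bzero d ^ n)%A = mkM2 (a ^ n)%A bzero bzero (d ^ n)%A.
Proof.
  induction n. reflexivity.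
  rewrite !npowS, IHn. m2_cbn. f_equal; nring.
Qed.

Lemma m2_diag_quasinilpotent a d : quasinilpotent a -> quasinilpotent d ->
  quasinilpotent (mkM2 a bzero bzero d).
Proof.
  intros Ha Hd. apply quasinilpotent_of_bound. intros e He.
  destruct (quasinilpotent_bound _ a Ha e He) as [Ka [HKa Ba]].
  destruct (quasinilpotent_bound _ d Hd e He) as [Kd [HKd Bd]].
  exists (Ka + Kd), 0%nat. intros n _. rewrite m2_diag_pow.
  change (bnorm (a ^ n)%A + bnorm (@bzero A) + bnorm (@bzero A) + bnorm (d ^ n)%A
          <= (Ka + Kd) * e ^ n).
  rewrite (nnorm0 (cbalg A) : bnorm (@bzero A) = 0).
  specialize (Ba n). specialize (Bd n). cbn in *. lra.
Qed.

Lemma m2_gd_diag a ad d dd : gd a ad -> gd d dd ->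
  is_gd (mkM2 a bzero bzero d) (mkM2 ad bzero bzero dd).
Proof.
  intros Ha Hd. pose proof Ha as [Ha1 [Ha2 Ha3]]. pose proof Hd as [Hd1 [Hd2 Hd3]].
  split; [|split].
  - m2_cbn. f_equal; try nring. rewrite Ha1; reflexivity. rewrite Hd1; reflexivity.
  - m2_cbn. f_equal; try nring.
    + transitivity (bmul (bmul ad a) ad). exact Ha2. nring.
    + transitivity (bmul (bmul dd d) dd). exact Hd2. nring.
  - replace (mkM2 a bzero bzero d - mkM2 a bzero bzero d * mkM2 a bzero bzero d
             * mkM2 ad bzero bzero dd)%A
      with (mkM2 (a - a * a * ad)%A bzero bzero (d - d * d * dd)%A)
      by (m2_cbn; f_equal; nring).
    apply m2_diag_quasinilpotent; assumption.
Qed.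

Lemma m2_gd_antidiag b c w v : gd (bmul b c) w -> gd (bmul c b) v ->
  is_gd (mkM2 bzero b c bzero) (mkM2 bzero (bmul b v) (bmul c w) bzero).
Proof.
  intros Hw Hv. pose proof Hw as [_ [Hw2 _]]. pose proof Hv as [_ [Hv2 _]].
  destruct (gd_mul_swap (cbalg A) b c w v Hw Hv) as [Hbvc Hcwb].
  set (Q := mkM2 bzero b c bzero). set (Qd := mkM2 bzero (bmul b v) (bmul c w) bzero).
  assert (Hcomm : (Qd * Q = Q * Qd)%A).
  { unfold Q, Qd; m2_cbn. f_equal; try nring.
    - transitivity (b * v * c)%A. nring. rewrite Hbvc. nring.
    - transitivity (c * w * b)%A. nring. rewrite Hcwb. nring. }
  assert (HQd : Qd = (Qd * Q * Qd)%A).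
  { unfold Q, Qd; m2_cbn. f_equal; try nring.
    - transitivity (bmul b (bmul (bmul v (bmul c b)) v)). rewrite <- Hv2; reflexivity. nring.
    - transitivity (bmul c (bmul (bmul w (bmul b c)) w)). rewrite <- Hw2; reflexivity. nring. }
  split; [exact Hcomm | split; [exact HQd|]].
  replace (Q - Q * Q * Qd)%A with (Q * nspi Q Qd)%A by (unfold nspi; nring).
  apply quasinilpotent_of_sq. rewrite sq_mul_spi by assumption.
  replace (Q * Q * nspi Q Qd)%A
    with (mkM2 (b * c * nspi (b * c) w)%A bzero bzero (c * b * nspi (c * b) v)%A)
    by (unfold nspi; m2_cbn; f_equal; nring).
  apply m2_diag_quasinilpotent; apply gd_quasinilpotent_spi; assumption.
Qed.

Lemma m2_twisted (lam : cplx) a b c d ad dd w v :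
  bmul a b = bscal lam (bmul (bmul (bmul (spi a ad) b) d) (spi (bmul c b) v)) ->
  bmul d c = bscal lam (bmul (bmul (bmul (spi d dd) c) a) (spi (bmul b c) w)) ->
  let P := mkM2 a bzero bzero d in
  let Q := mkM2 bzero b c bzero in
  let Pd := mkM2 ad bzero bzero dd in
  let Qd := mkM2 bzero (bmul b v) (bmul c w) bzero in
  (P * Q = lam *: (nspi P Pd * Q * P * nspi Q Qd))%A.
Proof.
  intros H1 H2 P Q Pd Qd. unfold nspi; m2_cbn. f_equal.
  - transitivity (@bzero A). nring.
    transitivity (bscal lam (@bzero A)). symmetry; exact (nscal0 (cbalg A) lam). f_equal; nring.
  - transitivity (bmul a b). nring. rewrite H1. f_equal. unfold spi, bsub. nring.
  - transitivity (bmul d c). nring. rewrite H2. f_equal. unfold spi, bsub. nring.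
  - transitivity (@bzero A). nring.
    transitivity (bscal lam (@bzero A)). symmetry; exact (nscal0 (cbalg A) lam). f_equal; nring.
Qed.

Lemma m2_drazin_blocks a b c d ad dd w v :
  let P := mkM2 a bzero bzero d in
  let Q := mkM2 bzero b c bzero in
  let Pd := mkM2 ad bzero bzero dd in
  let Qd := mkM2 bzero (bmul b v) (bmul c w) bzero in
  mkM2 (bmul (spi (bmul b c) w) ad) (bmul (bmul b v) (spi d dd))
       (bmul (bmul c w) (spi a ad)) (bmul (spi (bmul c b) v) dd)
  = (nspi Q Qd * Pd + Qd * nspi P Pd)%A.
Proof. intros P Q Pd Qd. unfold nspi, spi, bsub; m2_cbn. f_equal; nring. Qed.

End MatrixLemmas.

Theorem theorem3p3 (A : CBanachAlg) (lam : cplx) (Hlam : lam <> c0)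
  (a b c d : A) (ad dd bcd cbd : A)
  (Ha : gd a ad) (Hd : gd d dd)
  (Hbc : gd (bmul b c) bcd) (Hcb : gd (bmul c b) cbd)
  (H1 : bmul a b =
        bscal lam (bmul (bmul (bmul (spi a ad) b) d) (spi (bmul c b) cbd)))
  (H2 : bmul d c =
        bscal lam (bmul (bmul (bmul (spi d dd) c) a) (spi (bmul b c) bcd))) :
  let M := mkM2 a b c d in
  let P := mkM2 a bzero bzero d in
  let Q := mkM2 bzero b c bzero in
  let Pd := mkM2 ad bzero bzero dd in
  let Qd := mkM2 bzero (bmul b cbd) (bmul c bcd) bzero in
  let Ppi := m2sub m2one (m2mul P Pd) in
  let Qpi := m2sub m2one (m2mul Q Qd) in
  let E := mkM2 (bmul (spi (bmul b c) bcd) ad) (bmul (bmul b cbd) (spi d dd))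
                (bmul (bmul c bcd) (spi a ad)) (bmul (spi (bmul c b) cbd) dd) in
  exists (S1 S2 S3 S4 : M2 A) (T : nat -> M2 A),
    m2series (fun n => m2mul (m2mul (m2mul (m2pow Qd (n + 2)) P) (m2pow M n)) Ppi) S1 /\
    m2series (fun n => m2mul (m2mul (m2pow M n) Q) (m2pow Pd (n + 2))) S2 /\
    (forall n, m2series (fun k => m2mul (m2mul (m2mul (m2mul (m2pow Qd (k + 1)) P)
                                   (m2pow M (n + k))) Q) (m2pow Pd (n + 2))) (T n)) /\
    m2series T S3 /\
    m2series (fun n => m2mul (m2mul (m2mul (m2mul (m2pow Qd (n + 2)) P) (m2pow M n)) Q) Pd) S4 /\
    m2gd M (m2sub (m2sub (m2add (m2add E S1) (m2mul Qpi S2)) S3) S4).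
Proof.
  intros M P Q Pd Qd Ppi Qpi E.
  pose proof (m2_gd_diag A a ad d dd Ha Hd) as HP.
  pose proof (m2_gd_antidiag A b c bcd cbd Hbc Hcb) as HQ.
  assert (Htw : (P * Q = lam *: (nspi P Pd * Q * P * nspi Q Qd))%A)
    by exact (m2_twisted A lam a b c d ad dd bcd cbd H1 H2).
  pose proof (twisted_QdP _ P Pd Q Qd lam Hlam HP HQ Htw) as HQdP.
  pose proof (twisted_QPd _ P Pd Q Qd lam Hlam HP HQ Htw) as HQPd.
  exists (m2zero A), (m2zero A), (m2zero A), (m2zero A), (fun _ => m2zero A).
  split; [|split; [|split; [|split; [|split]]]]; try apply m2series_of_zero.
  - intros n. rewrite (m2pow_mul_eq0l A Qd P) by (lia || exact HQdP). rewrite !m2mul0l. reflexivity.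
  - intros n. rewrite <- m2mulA, (m2pow_mul_eq0r A Pd Q) by (lia || exact HQPd).
    apply m2mul0r.
  - intros n. apply m2series_of_zero. intros k.
    rewrite (m2pow_mul_eq0l A Qd P) by (lia || exact HQdP). rewrite !m2mul0l. reflexivity.
  - intros k. reflexivity.
  - intros n. rewrite (m2pow_mul_eq0l A Qd P) by (lia || exact HQdP). rewrite !m2mul0l. reflexivity.
  - assert (HM : M = (P + Q)%A) by (unfold M, P, Q; cbn; unfold m2add; cbn; f_equal; nring).
    assert (Hd_sum : m2sub (m2sub (m2add (m2add E (m2zero A)) (m2mul Qpi (m2zero A))) (m2zero A))
                           (m2zero A) = (Pd + Qd)%A).
    { rewrite m2mul0r. transitivity E. { change (E + n0 + n0 - n0 - n0 = E)%A. nring. }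
      unfold E. rewrite (m2_drazin_blocks A a b c d ad dd bcd cbd).
      exact (twisted_drazin_split _ P Pd Q Qd lam Hlam HP HQ Htw). }
    rewrite Hd_sum, HM. exact (twisted_gd_add _ P Pd Q Qd lam Hlam HP HQ Htw).
Qed.
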